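(* In the wake-up algorithm with advice described in the context, let $B_1$ be the set of nodes $v$ with advice bit $g_v=1$. Then the message complexity over all phases in which some node of $B_1$ is the actor is $O\left(\sqrt{\frac{n^3}{2^\beta}}\log n\right)$ with high probability, where $\beta=\max\{\lfloor(\alpha-1)/2\rfloor,0\}$.
   Context: Model: connected graph on $n$ nodes, unique IDs in $[n]$, synchronous port numbering $\mathsf{CONGEST}$ model with quantum routing (classical link plus quantum channel per edge; sleeping nodes wake only on classical messages, and a quantum message to a sleeping node causes a $-1$ phase reflection, awake nodes reflect $+1$). Message complexity counts classical messages plus, per round, the maximum number of quantum messages over all computational-basis configurations of the global state. Each node gets at most $\alpha$ advice bits from an oracle that knows everything including the initially awake set $A_1$. Sets: $A_0=\emptyset$, $S_i=(\bigcup_{u\in A_i}N_u)\setminus(A_i\cup A_{i-1})$, $A_{i+1}=S_i$; listing $A_i$ as $v_1^{(i)},\dots$ by increasing ID, $S^{(i)}_{v_j^{(i)}}=N_{v_j^{(i)}}\cap(S_i\setminus\bigcup_{k<j}S^{(i)}_{v_k^{(i)}})$; $v$ is an actor of epoch $i$ iff $v\in A_i$. Advice (for $\alpha\ge3$; no advice if $\alpha\le2$): advice tree $\mathcal T_v$ — complete binary tree of depth $\log_2 n_v'$ ($n_v'$ smallest power of 2 $\ge\deg(v)$) with leaves labeled $1,\dots,\deg(v)$ left to right and remaining rightmost leaves labeled $\deg(v)$; a bit string gives a root path and its associated port range is the interval between smallest and largest leaf labels below the path's endpoint; $P_v^\beta(w)$ is the range of the length-$\beta$ string whose range contains $v$'s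 port to $w$. For actor $v$ of epoch $i$: $g_v=1$ iff $|S_v^{(i)}|\ge2^\beta$; $\Lambda_v$ empty if $g_v=1$ or $S_v^{(i)}=\emptyset$, else encodes $P_v^\beta(w_1)$, $w_1$ the smallest-ID node in $S_v^{(i)}$; with $S_1'=S_v^{(i)}$ and $S_j'$ obtained from $S_{j-1}'$ by removing nodes reached by $v$ via ports in $P_v^\beta(w_{j-1})$, $w_j$ the smallest-ID node of $S_j'$, the proxy advice $\Pi_{w_{j-1}}$ stored at $w_{j-1}$ encodes $P_v^\beta(w_j)$ (empty if $S_j'=\emptyset$). Algorithm: epochs of $n$ phases, each phase $Cn\log n$ rounds; initially awake nodes are actors in epoch 1; a node woken during epoch $i$ is an actor in epoch $i+1$, only once, in the phase equal to its ID. Actor $v$: if $g_v=1$ or $\alpha\le2$, it runs $\mathsf{IteratedQuantumSearch}$ (which w.h.p. finds all ports $p$ in a given range $X$ with $f(p)=1$, using $O(\sqrt{|X|\max\{C,1\}}\log n)$ rounds and messages, $C=|f^{-1}(1)|$) over all its ports with $f(p)=1$ iff the neighbor on port $p$ is asleep, waking each found neighbor by a classical message; if $g_v=0$ and $\Lambda_v$ is empty, it does nothing; otherwise it runs $\mathsf{IteratedQuantumSearch}$ on the range of $\Lambda_v$, waking sleeping neighbors there; a woken neighbor $w$ with proxy advice $\Pi_w$ sends it to $v$, and $v$ repeats on the range of the received proxy advice until no new proxy advice arrives. ''With high probability'': probability at least $1-1/n^c$. *)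

From HB Require Import structures.
From mathcomp Require Import all_boot all_order all_algebra.
From mathcomp Require Import reals exp.
Set Implicit Arguments. Unset Strict Implicit. Unset Printing Implicit Defensive.
Import Order.TTheory GRing.Theory Num.Theory.

(* Graphs.  Nodes are 'I_n; the ID of node v is (val v).+1 in [n], so the   *)
(* order "by increasing ID" is the order of 'I_n.                            *)
Section Graph.
Variables (n : nat) (adj : rel 'I_n).

Definition simple_graph : Prop := symmetric adj /\ irreflexive adj.
Definition connected_graph : Prop := forall x y : 'I_n, connect adj x y.

Definition nbr (v : 'I_n) : {set 'I_n} := [set w | adj v w].
Definition deg (v : 'I_n) : nat := #|nbr v|.

Definition port_numbering (port : 'I_n -> 'I_n -> nat) : Prop :=
  forall v, {in nbr v &, injective (port v)} /\
            {in nbr v, forall w, 1 <= port v w <= deg v}.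

(* Epochs: A_0 = set0, A_1 = initially awake,                                *)
(*   S_i = (\bigcup_{u in A_i} N_u) \ (A_i u A_{i-1}),  A_{i+1} = S_i.      *)
Definition Snext (Ai Aprev : {set 'I_n}) : {set 'I_n} :=
  (\bigcup_(u in Ai) nbr u) :\: (Ai :|: Aprev).

Definition epoch_step (p : {set 'I_n} * {set 'I_n}) :=
  (Snext p.1 p.2, p.1).

Definition epochA (A1 : {set 'I_n}) (i : nat) : {set 'I_n} :=
  if i is i'.+1 then (iter i' epoch_step (A1, set0)).1 else set0.

Definition epochS (A1 : {set 'I_n}) (i : nat) : {set 'I_n} :=
  Snext (epochA A1 i) (epochA A1 i.-1).

(* claimed A S k = \bigcup_{u in A, val u < k} S_u, where, listing A by
   increasing ID, S_{v_j} = N_{v_j} :&: (S \ \bigcup_{l<j} S_{v_l}). *)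
Fixpoint claimed (A S : {set 'I_n}) (k : nat) : {set 'I_n} :=
  if k is k'.+1 then
    claimed A S k' :|:
      (if insub k' is Some u then
         (if u \in A then nbr u :&: (S :\: claimed A S k') else set0)
       else set0)
  else set0.

Definition Spart (A1 : {set 'I_n}) (i : nat) (v : 'I_n) : {set 'I_n} :=
  nbr v :&: (epochS A1 i :\: claimed (epochA A1 i) (epochS A1 i) (val v)).

Definition actor_epoch (A1 : {set 'I_n}) (v : 'I_n) : option nat :=
  omap (@nat_of_ord _) [pick i : 'I_n.+1 | v \in epochA A1 i].

Definition SvOf (A1 : {set 'I_n}) (v : 'I_n) : {set 'I_n} :=
  if actor_epoch A1 v is Some i then Spart A1 i v else set0.

Definition beta (alpha : nat) : nat := (alpha.-1)./2.

Definition gbit (A1 : {set 'I_n}) (alpha : nat) (v : 'I_n) : bool :=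
  (3 <= alpha) && (2 ^ beta alpha <= #|SvOf A1 v|).

Definition B1 (A1 : {set 'I_n}) (alpha : nat) : {set 'I_n} :=
  [set v | gbit A1 alpha v].

Variable port : 'I_n -> 'I_n -> nat.

(* Advice tree T_v: depth d_v = log2 n'_v, n'_v the smallest power of 2 >=
   deg v; leaf k (0 <= k < 2^d_v, left to right) is labeled min(k+1, deg v). *)
Definition tdepth (v : 'I_n) : nat := up_log 2 (deg v).
Definition leaf_label (v : 'I_n) (k : nat) : nat := minn k.+1 (deg v).

(* The root path of length l given by the binary number b (0 <= b < 2^l) has
   below its endpoint the leaves b*2^(d-l) .. (b+1)*2^(d-l) - 1; its port
   range is [smallest label, largest label] of those leaves. *)
Definition path_range (v : 'I_n) (l b : nat) : nat * nat :=
  let s := 2 ^ (tdepth v - l) in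
  (leaf_label v (b * s), leaf_label v ((b.+1) * s).-1).

(* P_v^beta(w): range of the length-beta string whose subtree contains the
   leaf of v's port to w (length capped by the tree depth). *)
Definition Prange (alpha : nat) (v w : 'I_n) : nat * nat :=
  let l := minn (beta alpha) (tdepth v) in
  path_range v l ((port v w).-1 %/ 2 ^ (tdepth v - l)).

Definition in_range (r : nat * nat) (p : nat) : bool := r.1 <= p <= r.2.

Definition range_nodes (v : 'I_n) (r : nat * nat) : {set 'I_n} :=
  [set u in nbr v | in_range r (port v u)].

Definition min_node (S : {set 'I_n}) : option 'I_n :=
  [pick u in S | [forall u' in S, u <= u']].

Definition Lambda (A1 : {set 'I_n}) (alpha : nat) (v : 'I_n)
  : option (nat * nat) :=
  if (3 <= alpha) && ~~ gbit A1 alpha v then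
    omap (Prange alpha v) (min_node (SvOf A1 v))
  else None.

(* Proxy advice chain of v: S'_1 = S_v, w_j = min S'_j,
   S'_{j+1} = S'_j minus the nodes reached via ports in P_v(w_j);
   Pi_{w_j} = P_v(w_{j+1}) (none if S'_{j+1} is empty). *)
Fixpoint chain_proxy (alpha : nat) (v : 'I_n) (S' : {set 'I_n}) (fuel : nat)
  (w : 'I_n) : option (nat * nat) :=
  if fuel is f.+1 then
    if min_node S' is Some wj then
      let S'' := S' :\: [set u in S' | in_range (Prange alpha v wj) (port v u)] in
      if w == wj then omap (Prange alpha v) (min_node S'')
      else chain_proxy alpha v S'' f w
    else None
  else None.

Definition Pi (A1 : {set 'I_n}) (alpha : nat) (w : 'I_n) : option (nat * nat) :=
  if 3 <= alpha then
    if [pick v | (w \in SvOf A1 v) && ~~ gbit A1 alpha v] is Some v then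
      chain_proxy alpha v (SvOf A1 v) n w
    else None
  else None.

(* Execution of the algorithm, given the randomness of the successive calls *)
(* to IteratedQuantumSearch.                                                 *)
(* A call by actor v on the port range corresponding to the neighbour set X  *)
(* (|X| = size of the range) with target set T = asleep nodes of X (i.e. the *)
(* ports with f(p) = 1) and internal randomness r returns                    *)
(* qs r v X T = (found set, number of messages of the call).                 *)
Variables (A1 : {set 'I_n}) (alpha : nat).
Variables (Rnd : Type)
  (qs : Rnd -> 'I_n -> {set 'I_n} -> {set 'I_n} -> {set 'I_n} * nat).

Record state := State {
  awake : {set 'I_n};
  woke_epoch : {ffun 'I_n -> nat};  (* epoch of waking; 0 = initially awake *)
  ncalls : nat;
  costB1 : nat                      (* messages in phases with a B_1 actor *)
}.

(* one search by v on X, in epoch i, using call randomness rnd (ncalls st);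
   found neighbours are woken by classical messages. *)
Definition do_search (rnd : nat -> Rnd) (i : nat) (v : 'I_n) (X : {set 'I_n})
  (st : state) : state * {set 'I_n} * nat :=
  let out := qs (rnd (ncalls st)) v X (X :\: awake st) in
  let F := out.1 :&: X in
  let newly := F :\: awake st in
  (State (awake st :|: F)
         [ffun u => if u \in newly then i else woke_epoch st u]
         (ncalls st).+1 (costB1 st),
   newly, out.2 + #|F|).

(* the proxy-advice loop of an actor with g_v = 0 and nonempty Lambda_v;
   among several received proxy advices (impossible when the searches
   succeed) the one of the smallest-ID sender is used. *)
Fixpoint proxy_loop (rnd : nat -> Rnd) (i : nat) (v : 'I_n) (r : nat * nat)
  (fuel : nat) (st : state) : state * nat :=
  if fuel is f.+1 then
    let: (st', newly, m) := do_search rnd i v (range_nodes v r) st in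
    let senders := [set w in newly | Pi A1 alpha w != None] in
    let m' := m + #|senders| in
    match min_node senders with
    | Some w => if Pi A1 alpha w is Some r' then
                  let: (st'', m'') := proxy_loop rnd i v r' f st' in (st'', m' + m'')
                else (st', m')
    | None => (st', m')
    end
  else (st, 0).

Definition act (rnd : nat -> Rnd) (i : nat) (v : 'I_n) (st : state) : state :=
  let: (st', m) :=
    if (alpha <= 2) || gbit A1 alpha v then
      let: (st', _, m) := do_search rnd i v (nbr v) st in (st', m)
    else if Lambda A1 alpha v is Some r then proxy_loop rnd i v r n st
    else (st, 0) in
  State (awake st') (woke_epoch st') (ncalls st')
        (costB1 st' + (if v \in B1 A1 alpha then m else 0)).

(* phase j of epoch i: node with ID j+1 acts iff it was woken during epoch
   i-1 (initially awake nodes: epoch 0, so they act in epoch 1) *)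
Definition phase (rnd : nat -> Rnd) (i : nat) (st : state) (j : 'I_n) : state :=
  if (j \in awake st) && (woke_epoch st j == i.-1) then act rnd i j st else st.

Definition run_epoch (rnd : nat -> Rnd) (i : nat) (st : state) : state :=
  foldl (phase rnd i) st (enum 'I_n).

(* epochs 1..n (no node can act in a later epoch) *)
Definition run (rnd : nat -> Rnd) : state :=
  foldl (fun st i => run_epoch rnd i st)
        (State A1 [ffun=> 0] 0 0) (iota 1 n).

Definition B1_messages (rnd : nat -> Rnd) : nat := costB1 (run rnd).

End Graph.

(* Probability.  Each call uses fresh independent randomness drawn from the *)
(* distribution mu on a finite type Rnd; the execution has at most n*n calls *)
(* so the sample space is {ffun 'I_(n*n).+1 -> Rnd} with product measure.   *)
Section Prob.
Variable R : realType.
Local Open Scope ring_scope.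

Definition distribution (Rnd : finType) (mu : Rnd -> R) : Prop :=
  (forall r, 0 <= mu r) /\ \sum_r mu r = 1.

Definition prob1 (Rnd : finType) (mu : Rnd -> R) (E : pred Rnd) : R :=
  \sum_(r | E r) mu r.

Definition ncalls_max (n : nat) : nat := (n * n).+1.

Definition sample (n : nat) (Rnd : finType) (rho : {ffun 'I_(ncalls_max n) -> Rnd})
  : nat -> Rnd := fun k => rho (inord k).

Definition probN (n : nat) (Rnd : finType) (mu : Rnd -> R)
  (E : pred {ffun 'I_(ncalls_max n) -> Rnd}) : R :=
  \sum_(rho | E rho) \prod_k mu (rho k).

(* Guarantee of IteratedQuantumSearch with constants KQ (in the O) and
   cQ (failure probability 1/n^cQ): for every actor v, every port range
   (neighbour set X) and every set T of marked ports (f = 1), w.h.p. it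
   finds exactly T using <= KQ sqrt(|X| max(|T|,1)) log n messages. *)
Definition search_spec (n : nat) (adj : rel 'I_n) (Rnd : finType) (mu : Rnd -> R)
  (qs : Rnd -> 'I_n -> {set 'I_n} -> {set 'I_n} -> {set 'I_n} * nat)
  (KQ : R) (cQ : nat) : Prop :=
  forall (v : 'I_n) (X T : {set 'I_n}), X \subset nbr adj v -> T \subset X ->
    prob1 mu (fun r => ((qs r v X T).1 == T) &&
       (((qs r v X T).2)%:R <=
          KQ * Num.sqrt ((#|X| * maxn #|T| 1)%N%:R) * ln (n%:R : R)))
    >= 1 - 1 / (n%:R ^+ cQ).

End Prob.

From Pilot Require Import Defs.
From HB Require Import structures.
From mathcomp Require Import all_boot all_order all_algebra.
From mathcomp Require Import reals exp.
From mathcomp Require Import zify ring lra.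
Import Order.TTheory GRing.Theory Num.Theory.
Set Implicit Arguments. Unset Strict Implicit. Unset Printing Implicit Defensive.

(* A [B_1] actor [v] makes a single search over its [deg v <= n] ports; if it
   wakes [t_v] nodes, this costs [O(sqrt (n max(t_v,1)) log n)] messages plus
   [t_v] wake-up messages.  The sets [S_v] of distinct actors are disjoint and
   [|S_v| >= 2^beta] on [B_1], so [|B_1| 2^beta <= n]; the [t_v] sum to at most
   [n], and Cauchy-Schwarz gives
   [sum_v sqrt (n max(t_v,1)) <= sqrt (n |B_1| 2n) = O(sqrt (n^3 / 2^beta))].
   Each search uses a fresh random coordinate, on which the state before it
   does not depend; a union bound over the at most [n^5] triples (epoch, actor,
   call number), each failing with probability [n^-(c+5)], gives the claim. *)

Section Layers.
Variables (n : nat) (adj : rel 'I_n) (A1 : {set 'I_n}).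
Hypothesis adj_sym : symmetric adj.

Local Notation A := (epochA adj A1).

Lemma iter_epoch_step k : iter k (@epoch_step n adj) (A1, set0) = (A k.+1, A k).
Proof. by elim: k => [|k IH] //=. Qed.

Lemma epochA_SS k : A k.+2 = Snext adj (A k.+1) (A k).
Proof. by rewrite {1}/epochA /= iter_epoch_step. Qed.

Lemma epochS_epochA i : 0 < i -> epochS adj A1 i = A i.+1.
Proof. by case: i => // k _; rewrite /epochS epochA_SS. Qed.

Lemma epochA_nbr j w y : 0 < j -> w \in A j -> adj w y ->
  [\/ y \in A j.+1, y \in A j | y \in A j.-1].
Proof.
case: j => // k _ Hw Hwy; rewrite epochA_SS /Snext /=.
case Hy1: (y \in A k.+1); first exact: Or32.
case Hy0: (y \in A k); first exact: Or33.
apply: Or31; rewrite !inE Hy1 Hy0 /=.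
by apply/bigcupP; exists w; rewrite ?inE.
Qed.

(* If [x] lies in [A i] and [A j] with [j < i], its neighbour [u] in [A (i-1)]
   lies in [A (j-1)], [A j] or [A (j+1)]; as [x] is in neither [A (i-1)] nor
   [A (i-2)], all three indices are below [i - 1]. *)
Lemma epochA_disjoint i j x : j < i -> x \in A i -> x \in A j -> False.
Proof.
elim/ltn_ind: i j x => -[|[|k]] IH // j x.
  by case: j => // _ _; rewrite inE.
move=> lt_ji; rewrite epochA_SS /Snext !inE negb_or.
case/andP=> /andP[x_notin1 x_notin0] /bigcupP[u Hu]; rewrite inE => adj_ux.
case: j lt_ji => [|j] lt_ji x_in; first by rewrite inE in x_in.
have adj_xu : adj x u by rewrite adj_sym.
have lt_jk : j.+2 < k.+1.
  have ne1 : j.+1 != k.+1 by apply: contraNneq x_notin1 => <-.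
  have ne0 : j.+1 != k by apply: contraNneq x_notin0 => <-.
  lia.
case: (epochA_nbr (ltn0Sn j) x_in adj_xu) => u_in.
- exact: (IH k.+1 _ j.+2 u lt_jk Hu u_in).
- exact: (IH k.+1 _ j.+1 u (ltnW lt_jk) Hu u_in).
- exact: (IH k.+1 _ j u (ltnW (ltnW lt_jk)) Hu u_in).
Qed.

Lemma epochA_inj i i' v : v \in A i -> v \in A i' -> i = i'.
Proof.
move=> Hi Hi'; case: (ltngtP i i') => // H.
- by case: (epochA_disjoint H Hi' Hi).
- by case: (epochA_disjoint H Hi Hi').
Qed.

Lemma claimed_sub (B S : {set 'I_n}) k k' :
  k <= k' -> claimed adj B S k \subset claimed adj B S k'.
Proof.
elim: k' => [|k' IH]; first by rewrite leqn0 => /eqP ->.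
rewrite leq_eqVlt => /orP[/eqP -> //|]; rewrite ltnS => /IH.
by move/subset_trans; apply; exact: subsetUl.
Qed.

Lemma claimed_S (B S : {set 'I_n}) u : u \in B ->
  nbr adj u :&: (S :\: claimed adj B S u) \subset claimed adj B S u.+1.
Proof. by move=> Hu /=; rewrite valK Hu; exact: subsetUr. Qed.

Lemma mem_SvOf v u : u \in SvOf adj A1 v ->
  exists2 i, v \in A i & u \in Spart adj A1 i v /\ 0 < i.
Proof.
rewrite /SvOf /actor_epoch; case: pickP => [i Hi|] /=; last by rewrite inE.
move=> Hu; exists i => //; split => //.
by case: (nat_of_ord i) Hi => //; rewrite inE.
Qed.

Lemma Spart_epochA i v u : 0 < i -> u \in Spart adj A1 i v -> u \in A i.+1.
Proof. by move=> i_gt0; rewrite -epochS_epochA // => /setIP[_ /setDP[]]. Qed.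

Lemma Spart_disjoint i (v v' u : 'I_n) : v < v' -> v \in A i ->
  u \in Spart adj A1 i v -> u \notin Spart adj A1 i v'.
Proof.
move=> lt_vv' Hv Hu.
have Hc := subsetP (claimed_sub (A i) (epochS adj A1 i) lt_vv') _
             (subsetP (claimed_S _ Hv) _ Hu).
by rewrite /Spart in_setI in_setD Hc andbF.
Qed.

Lemma SvOf_inj v v' u : u \in SvOf adj A1 v -> u \in SvOf adj A1 v' -> v = v'.
Proof.
case/mem_SvOf=> i Hv [Hu i_gt0] /mem_SvOf[i' Hv' [Hu' i'_gt0]].
have [eq_ii] := epochA_inj (Spart_epochA i_gt0 Hu) (Spart_epochA i'_gt0 Hu').
move: Hv' Hu'; rewrite -{}eq_ii => Hv' Hu'.
case: (ltngtP v v') => [lt|lt|/val_inj //].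
- by rewrite (negbTE (Spart_disjoint lt Hv Hu)) in Hu'.
- by rewrite (negbTE (Spart_disjoint lt Hv' Hu')) in Hu.
Qed.

Lemma sum_card_SvOf : \sum_v #|SvOf adj A1 v| <= n.
Proof.
rewrite -[X in _ <= X]card_ord -sum1_card.
under eq_bigr => v _ do rewrite -sum1_card big_mkcond /=.
rewrite exchange_big /=; apply: leq_sum => u _.
rewrite -big_mkcond /= sum1_card; apply/card_le1_eqP => v v'.
by move=> Hv Hv'; apply: (SvOf_inj (u := u)).
Qed.

Lemma card_B1 alpha : #|B1 adj A1 alpha| * 2 ^ beta alpha <= n.
Proof.
apply: leq_trans sum_card_SvOf.
rewrite -sum1_card big_distrl /= mul1n.
apply: (@leq_trans (\sum_(v in B1 adj A1 alpha) #|SvOf adj A1 v|)).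
  by apply: leq_sum => v; rewrite inE => /andP[].
by rewrite [X in _ <= X](bigID [in B1 adj A1 alpha]) leq_addr.
Qed.

End Layers.

Section Execution.
Variables (n : nat) (adj : rel 'I_n) (port : 'I_n -> 'I_n -> nat).
Variables (A1 : {set 'I_n}) (alpha : nat).
Variables (Rnd : Type) (qs : Rnd -> 'I_n -> {set 'I_n} -> {set 'I_n} -> {set 'I_n} * nat).

Local Notation search := (do_search qs).
Local Notation proxy := (proxy_loop adj port A1 alpha qs).
Local Notation act := (act adj port A1 alpha qs).
Local Notation phase := (phase adj port A1 alpha qs).

Definition same_prefix (r1 r2 : nat -> Rnd) k := forall j, j < k -> r1 j = r2 j.

Lemma same_prefix_le r1 r2 k k' : k <= k' -> same_prefix r1 r2 k' -> same_prefix r1 r2 k.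
Proof. by move=> le_kk' Hk j lt_jk; apply/Hk/(leq_trans lt_jk). Qed.

Definition extends i (st st' : state n) :=
  [/\ awake st \subset awake st',
      {in awake st, forall u, woke_epoch st' u = woke_epoch st u},
      (forall u, u \notin awake st -> u \in awake st' -> woke_epoch st' u = i)
    & ncalls st <= ncalls st'].

Lemma extends_refl i st : extends i st st.
Proof. by split=> // u /negPf ->. Qed.

Lemma extends_trans i s1 s2 s3 : extends i s1 s2 -> extends i s2 s3 -> extends i s1 s3.
Proof.
case=> sub12 W12 N12 C12 [sub23 W23 N23 C23]; split.
- exact: subset_trans sub23.
- by move=> u Hu; rewrite W23 ?W12 //; apply: (subsetP sub12).
- move=> u Hu Hu3; case Hu2: (u \in awake s2); first by rewrite W23 // N12.
  by rewrite N23 ?Hu2.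
- exact: leq_trans C23.
Qed.

Lemma do_search_extends rnd i v X st :
  let st' := (search rnd i v X st).1.1 in
  [/\ extends i st st', ncalls st' = (ncalls st).+1 & costB1 st' = costB1 st].
Proof.
split=> //; split=> //=; first exact: subsetUl.
- by move=> u Hu; rewrite ffunE inE Hu.
- by move=> u Hu; rewrite in_setU (negbTE Hu) /= => HF; rewrite ffunE in_setD Hu HF.
Qed.

Lemma do_search_causal r1 r2 i v X st : r1 (ncalls st) = r2 (ncalls st) ->
  search r1 i v X st = search r2 i v X st.
Proof. by rewrite /do_search => ->. Qed.

Lemma proxy_loopS rnd i v r f st : proxy rnd i v r f.+1 st =
    let: (st', newly, m) := search rnd i v (range_nodes adj port v r) st in
    let senders := [set w in newly | Pi adj port A1 alpha w != None] in
    let m' := m + #|senders| in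
    match min_node senders with
    | Some w => if Pi adj port A1 alpha w is Some r' then
                  let: (st'', m'') := proxy rnd i v r' f st' in (st'', m' + m'')
                else (st', m')
    | None => (st', m')
    end.
Proof. by []. Qed.

Lemma proxy_loop_extends rnd i v r f st :
  let st' := (proxy rnd i v r f st).1 in
  [/\ extends i st st', ncalls st' <= ncalls st + f & costB1 st' = costB1 st].
Proof.
elim: f r st => [|f IH] r st; first by split; rewrite ?addn0 //; exact: extends_refl.
rewrite proxy_loopS.
have [E1 N1 C1] := do_search_extends rnd i v (range_nodes adj port v r) st.
case: (search _ _ _ _ _) E1 N1 C1 => [[st1 nw] m] /= E1 N1 C1.
have N1' : ncalls st1 <= ncalls st + f.+1 by rewrite N1 addnS ltnS leq_addr.
case: min_node => [w|] //; case: (Pi _ _ _ _ w) => [r'|] //.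
have [E2 N2 C2] := IH r' st1.
case: (proxy _ _ _ _ _ _) E2 N2 C2 => [st2 m2] /= E2 N2 C2; split.
- exact: extends_trans E2.
- by rewrite (leq_trans N2) // N1 addnS addSn.
- by rewrite C2 C1.
Qed.

Lemma proxy_loop_ncalls_gt rnd i v r f st :
  ncalls st < ncalls (proxy rnd i v r f.+1 st).1.
Proof.
rewrite proxy_loopS.
have [_ N1 _] := do_search_extends rnd i v (range_nodes adj port v r) st.
case: (search _ _ _ _ _) N1 => [[st1 nw] m] /= N1.
case: min_node => [w|]; [case: (Pi _ _ _ _ w) => [r'|] |]; rewrite /= ?N1 //.
have [[_ _ _ le_ncalls] _ _] := proxy_loop_extends rnd i v r' f st1.
by case: (proxy _ _ _ _ _ _) le_ncalls => [st2 m2] /=; rewrite -N1.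
Qed.

Lemma proxy_loop_causal r1 r2 i v r f st :
  same_prefix r1 r2 (ncalls (proxy r1 i v r f st).1) ->
  proxy r1 i v r f st = proxy r2 i v r f st.
Proof.
elim: f r st => [|f IH] r st Hpre //.
have Hk := Hpre _ (proxy_loop_ncalls_gt r1 i v r f st).
rewrite !proxy_loopS in Hpre *.
rewrite -(do_search_causal _ _ _ Hk).
case: (search r1 _ _ _ _) Hpre => [[st1 nw] m] /=.
case: min_node => [w|]; [case: (Pi _ _ _ _ w) => [r'|] |] => //.
by case E: (proxy r1 _ _ _ _ _) => [st2 m2] /= Hpre; rewrite -IH E.
Qed.

Lemma act_extends rnd i v st :
  [/\ extends i st (act rnd i v st), ncalls (act rnd i v st) <= ncalls st + n &
      (v \notin B1 adj A1 alpha -> costB1 (act rnd i v st) = costB1 st)].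
Proof.
have n_gt0 : 0 < n by apply: leq_ltn_trans (ltn_ord v).
rewrite /Defs.act; case: (_ || _).
  have [E1 N1 C1] := do_search_extends rnd i v (nbr adj v) st.
  case: (search _ _ _ _ _) E1 N1 C1 => [[st1 nw] m] /= [sub W N le] N1 C1.
  split=> //=; first by rewrite N1 -addn1 leq_add2l.
  by move/negbTE=> ->; rewrite addn0.
case: Lambda => [r|] /=; last first.
  split; rewrite ?leq_addr //; last by case: (_ \in _); rewrite ?addn0.
  by split=> // u /negPf ->.
have [E1 N1 C1] := proxy_loop_extends rnd i v r n st.
case: (proxy _ _ _ _ _ _) E1 N1 C1 => [st1 m] /= [sub W N le] N1 C1.
by split=> // /negbTE ->; rewrite addn0.
Qed.

Lemma act_B1 rnd i v st : v \in B1 adj A1 alpha ->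
  let: (st', _, m) := search rnd i v (nbr adj v) st in
  act rnd i v st = State (awake st') (woke_epoch st') (ncalls st') (costB1 st' + m).
Proof.
move=> Hv; have Hg : gbit adj A1 alpha v by move: Hv; rewrite inE.
by rewrite /Defs.act Hg orbT Hv; case: (search _ _ _ _ _) => [[st' nw] m].
Qed.

Definition causal (F : (nat -> Rnd) -> state n -> state n) : Prop :=
  (forall rnd st, ncalls st <= ncalls (F rnd st)) /\
  (forall r1 r2 st, same_prefix r1 r2 (ncalls (F r1 st)) -> F r1 st = F r2 st).

Lemma causal_comp F G : causal F -> causal G -> causal (fun rnd st => G rnd (F rnd st)).
Proof.
move=> [F_mono F_causal] [G_mono G_causal]; split=> [rnd st|r1 r2 st Hpre].
  exact: leq_trans (F_mono _ _) (G_mono _ _).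
have EF : F r1 st = F r2 st by apply: F_causal; exact: same_prefix_le (G_mono _ _) Hpre.
by rewrite -EF; apply: G_causal.
Qed.

Lemma causal_foldl (T : Type) (F : T -> (nat -> Rnd) -> state n -> state n) l :
  (forall x, causal (F x)) -> causal (fun rnd st => foldl (fun st x => F x rnd st) st l).
Proof.
move=> F_causal; elim: l => [|x l IH] /=; first by split.
exact: (causal_comp (F_causal x) IH).
Qed.

Lemma causal_act i v : causal (fun rnd => act rnd i v).
Proof.
split=> [rnd st|r1 r2 st]; first by case: (act_extends rnd i v st) => -[].
rewrite /Defs.act; case: (_ || _) => Hpre.
  have [_ N1 _] := do_search_extends r1 i v (nbr adj v) st.
  rewrite -(@do_search_causal r1 r2) //; apply: Hpre.
  by case: (search _ _ _ _ _) N1 => [[st1 nw] m] /= ->.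
case: Lambda Hpre => [r|] // Hpre.
by rewrite -(@proxy_loop_causal r1 r2) //; case: (proxy _ _ _ _ _ _) Hpre.
Qed.

Lemma causal_phase i v : causal (fun rnd st => phase rnd i st v).
Proof.
have [act_mono act_causal] := causal_act i v.
split=> [rnd st|r1 r2 st]; rewrite /Defs.phase; case: ifP => _ //.
exact: act_causal.
Qed.

Definition run_upto (rnd : nat -> Rnd) (k : nat) : state n :=
  foldl (fun st i => run_epoch adj port A1 alpha qs rnd i st)
        (State A1 [ffun=> 0] 0 0) (iota 1 k).

Definition pre_phase (rnd : nat -> Rnd) (i : nat) (v : 'I_n) : state n :=
  foldl (phase rnd i) (run_upto rnd i.-1) (take v (enum 'I_n)).

Lemma pre_phase_causal r1 r2 i v :
  same_prefix r1 r2 (ncalls (pre_phase r1 i v)) -> pre_phase r1 i v = pre_phase r2 i v.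
Proof.
have epoch_causal i' l := causal_foldl l (fun v => causal_phase i' v).
have run_causal := causal_foldl (iota 1 i.-1) (fun i' => epoch_causal i' (enum 'I_n)).
exact: (causal_comp run_causal (epoch_causal i _)).2.
Qed.

End Execution.

Section CostBound.
Local Open Scope ring_scope.
Variable R : realType.
Implicit Types (C : R).

Lemma le_sqr_nonneg (x y : R) : 0 <= x -> 0 <= y -> x ^+ 2 <= y ^+ 2 -> x <= y.
Proof. by move=> x_ge0 y_ge0; rewrite (ler_pXn2r (n := 2)) ?nnegrE. Qed.

(* Cauchy-Schwarz, one term at a time: [2 a q <= d (t + 1) + (s + d)] by AM-GM,
   since [(a q)^2 <= (d (t + 1)) (s + d)]. *)
Lemma sqr_add_le (a q d s t : R) : 0 <= a -> 0 <= d -> 0 <= s -> 0 <= q ->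
  q ^+ 2 <= t + 1 -> a ^+ 2 <= d * (s + d) ->
  (a + q) ^+ 2 <= (d + 1) * ((s + t) + (d + 1)).
Proof.
move=> a_ge0 d_ge0 s_ge0 q_ge0 hq ha.
have t1_ge0 : 0 <= t + 1 by apply: le_trans hq; exact: sqr_ge0.
have haq : (a * q) ^+ 2 <= (d * (t + 1)) * (s + d).
  have -> : d * (t + 1) * (s + d) = d * (s + d) * (t + 1) by ring.
  by rewrite exprMn; apply: ler_pM => //; exact: sqr_ge0.
have h2aq : 2 * (a * q) <= d * (t + 1) + (s + d).
  have aq_ge0 : 0 <= a * q by exact: mulr_ge0.
  apply: le_sqr_nonneg; [nra | nra |].
  have := sqr_ge0 (d * (t + 1) - (s + d)); nra.
nra.
Qed.

Lemma search_cost_le (KQ L : R) (x y N : nat) : (x <= N)%N -> 0 <= L ->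
  KQ * Num.sqrt (x * y)%:R * L <= `|KQ| * Num.sqrt N%:R * L * Num.sqrt y%:R.
Proof.
move=> le_xN L_ge0.
have hx : Num.sqrt x%:R <= Num.sqrt N%:R :> R by rewrite ler_sqrt ?ler0n // ler_nat.
have yL_ge0 : 0 <= Num.sqrt y%:R * L by rewrite mulr_ge0 ?sqrtr_ge0.
rewrite natrM sqrtrM ?ler0n //.
set sx := Num.sqrt x%:R; set sy := Num.sqrt y%:R; set sN := Num.sqrt N%:R.
have -> : KQ * (sx * sy) * L = KQ * (sx * (sy * L)) by ring.
have -> : `|KQ| * sN * L * sy = `|KQ| * (sN * (sy * L)) by ring.
apply: le_trans (ler_wpM2r _ (ler_norm KQ)) _; first by rewrite mulr_ge0 ?sqrtr_ge0.
by rewrite ler_wpM2l // ler_wpM2r.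
Qed.

(* After [d] searches of [B_1] actors, with [s] nodes awake, the cost [c] is at
   most [C a + b]: [a] sums [sqrt (max t 1)] over these searches, [t] being the
   number of nodes a search wakes, and [b] sums [t]; Cauchy-Schwarz with
   [sum t <= s] bounds [a^2]. *)
Definition cost_bound C (n c s d : nat) : Prop :=
  exists a b, [/\ 0 <= a, c%:R <= C * a + b, a ^+ 2 <= d%:R * (s%:R + d%:R),
                  b <= s%:R & b <= d%:R * n%:R].

Lemma cost_bound0 C n s : cost_bound C n 0 s 0.
Proof. by exists 0, 0; rewrite !mul0r mulr0 addr0 expr0n /=. Qed.

Lemma cost_bound_awake C n c s s' d :
  (s <= s')%N -> cost_bound C n c s d -> cost_bound C n c s' d.
Proof.
move=> le_ss' [a [b [a_ge0 hc ha hbs hbd]]]; exists a, b; split=> //.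
- by apply: le_trans ha _; rewrite ler_wpM2l // lerD2r ler_nat.
- by apply: le_trans hbs _; rewrite ler_nat.
Qed.

Lemma cost_bound_search C n c s d m t : 0 <= C -> (t <= n)%N ->
  m%:R <= C * Num.sqrt (maxn t 1)%:R + t%:R ->
  cost_bound C n c s d -> cost_bound C n (c + m) (s + t) d.+1.
Proof.
move=> C_ge0 le_tn + [a [b [a_ge0 hc ha hbs hbd]]].
set q := Num.sqrt _ => hm.
have q_ge0 : 0 <= q := sqrtr_ge0 _.
have hq : q ^+ 2 <= t%:R + 1.
  by rewrite sqr_sqrtr ?ler0n // natr1 ler_nat geq_max leqnSn.
exists (a + q), (b + t%:R); rewrite -!natr1 !natrD; split.
- exact: addr_ge0.
- by rewrite mulrDr; lra.
- exact: sqr_add_le.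
- by rewrite lerD2.
- have : t%:R <= n%:R :> R by rewrite ler_nat.
  lra.
Qed.

Lemma sqrt_mul_le_sqrt_cube (N P a d : R) : 0 < P -> 0 <= a -> 0 <= d ->
  d * P <= N -> a ^+ 2 <= d * (2 * N) -> Num.sqrt N * a <= 2 * Num.sqrt (N ^+ 3 / P).
Proof.
move=> P_gt0 a_ge0 d_ge0 hdP ha.
have N_ge0 : 0 <= N by apply: le_trans hdP; rewrite mulr_ge0 // ltW.
have hd : d <= N / P by rewrite ler_pdivlMr.
have x_ge0 : 0 <= N / P by rewrite divr_ge0 // ltW.
apply: le_sqr_nonneg; rewrite ?mulr_ge0 ?sqrtr_ge0 //.
have -> : N ^+ 3 / P = N ^+ 2 * (N / P) by rewrite mulrA -exprSr.
rewrite !exprMn !sqr_sqrtr //; last exact: mulr_ge0 (exprn_ge0 _ N_ge0) x_ge0.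
have h1 : N * a ^+ 2 <= N * (N / P * (2 * N)).
  apply: ler_wpM2l => //; apply: le_trans ha _; apply: ler_wpM2r => //; lra.
apply: le_trans h1 _; rewrite expr2; nra.
Qed.

Lemma le_sqrt_cube (N P : R) : 1 <= P -> P <= N -> N <= Num.sqrt (N ^+ 3 / P).
Proof.
move=> P_ge1 le_PN; have N_ge0 : 0 <= N by lra.
have NP_ge1 : 1 <= N / P by rewrite ler_pdivlMr ?mul1r //; lra.
have -> : N ^+ 3 / P = N ^+ 2 * (N / P) by rewrite mulrA -exprSr.
have N2_ge0 := exprn_ge0 2 N_ge0.
apply: le_sqr_nonneg; rewrite ?sqrtr_ge0 // sqr_sqrtr; nra.
Qed.

Lemma cost_bound_final (KQ : R) (n c s d k : nat) :
  (2 <= n)%N -> (s <= n)%N -> (d * 2 ^ k <= n)%N ->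
  cost_bound (`|KQ| * Num.sqrt n%:R * ln n%:R) n c s d ->
  c%:R <= (2 * `|KQ| + (ln 2%:R)^-1) * Num.sqrt (n%:R ^+ 3 / 2%:R ^+ k) * ln n%:R.
Proof.
move=> n_ge2 le_sn le_dn.
set N : R := n%:R; set P : R := 2%:R ^+ k; set L := ln N.
set Q := Num.sqrt (N ^+ 3 / P).
case=> a [b [a_ge0 hc ha hbs hbd]].
have P_ge1 : 1 <= P by rewrite exprn_ege1 ?ler1n.
have hdP : d%:R * P <= N by rewrite /P -natrX -natrM ler_nat.
have ln2_gt0 : 0 < ln 2%:R :> R by rewrite ln_gt0 ?ltr1n.
have ln2_le : ln 2%:R <= L.
  by rewrite /L /N ler_ln ?posrE ?ltr0n ?(ler_nat R 2) //; lia.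
have Q_ge0 : 0 <= Q := sqrtr_ge0 _.
have hsN : s%:R <= N by rewrite ler_nat.
have hdN : d%:R <= N.
  by rewrite ler_nat (leq_trans _ le_dn) // leq_pmulr // expn_gt0.
have ha' : a ^+ 2 <= d%:R * (2 * N).
  by apply: le_trans ha _; rewrite ler_wpM2l //; lra.
have P_gt0 : 0 < P := lt_le_trans ltr01 P_ge1.
have hQa := sqrt_mul_le_sqrt_cube P_gt0 a_ge0 (ler0n _ d) hdP ha'.
have L_ge0 : 0 <= L by lra.
have ln2V_ge0 : 0 <= (ln 2%:R)^-1 :> R by rewrite invr_ge0 ltW.
have hb : b <= (ln 2%:R)^-1 * Q * L.
  have [d0|d_gt0] := posnP d.
    by apply: le_trans hbd _; rewrite d0 mul0r !mulr_ge0.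
  have hPN : P <= N.
    by apply: le_trans hdP; rewrite ler_peMl ?ler1n // ltW.
  have hNQ := le_sqrt_cube P_ge1 hPN.
  have hQ : Q <= (ln 2%:R)^-1 * Q * L.
    by rewrite mulrAC ler_peMl // ler_pdivlMl // mulr1.
  exact: le_trans hbs (le_trans hsN (le_trans hNQ hQ)).
have hKQ : `|KQ| * L * (Num.sqrt N * a) <= `|KQ| * L * (2 * Q).
  by rewrite ler_wpM2l // mulr_ge0.
apply: le_trans hc _; move: hKQ; rewrite -!mulrA !mulrDl; lra.
Qed.

End CostBound.

Lemma card_le_ord n (A : {set 'I_n}) : #|A| <= n.
Proof. by rewrite -[X in _ <= X]card_ord max_card. Qed.

Lemma card_setU1I (T : finType) (D B : {set T}) v : v \notin D ->
  #|(v |: D) :&: B| = (v \in B) + #|D :&: B|.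
Proof.
move=> vD; rewrite setIUl; have [vB|vB] := boolP (v \in B).
  by rewrite (setIidPl _) ?sub1set // cardsU1 inE (negPf vD).
rewrite (_ : [set v] :&: B = set0) ?set0U //.
by apply/setP => u; rewrite !inE; case: eqP => // ->; rewrite (negPf vB).
Qed.

Section CostInvariant.
Variables (R : realType) (KQ : R).
Variables (n : nat) (adj : rel 'I_n) (port : 'I_n -> 'I_n -> nat).
Variables (A1 : {set 'I_n}) (alpha : nat).
Variables (Rnd : Type) (qs : Rnd -> 'I_n -> {set 'I_n} -> {set 'I_n} -> {set 'I_n} * nat).

Local Notation act := (act adj port A1 alpha qs).
Local Notation phase := (phase adj port A1 alpha qs).
Local Notation B := (B1 adj A1 alpha).

Definition acts (st : state n) i (v : 'I_n) : bool :=
  (v \in awake st) && (woke_epoch st v == i.-1).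

Definition search_ok (rnd : nat -> Rnd) (st : state n) (v : 'I_n) : bool :=
  let X := nbr adj v in let T := X :\: awake st in
  let o := qs (rnd (ncalls st)) v X T in
  (o.1 == T) &&
  ((o.2)%:R <= KQ * Num.sqrt ((#|X| * maxn #|T| 1)%N%:R) * ln (n%:R : R))%R.

Lemma search_ok_ext r1 r2 st v : r1 (ncalls st) = r2 (ncalls st) ->
  search_ok r1 st v = search_ok r2 st v.
Proof. by rewrite /search_ok => ->. Qed.

(* the actors of epochs before [i] and of the first [p] phases of epoch [i] *)
Definition acted (st : state n) i p : {set 'I_n} :=
  [set u | (u \in awake st) &&
     ((woke_epoch st u < i.-1) || ((woke_epoch st u == i.-1) && (val u < p)))].

Definition cost_inv (st : state n) (D : {set 'I_n}) : Prop :=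
  ncalls st <= n * #|D| /\
  cost_bound (`|KQ| * Num.sqrt n%:R * ln n%:R)%R n (costB1 st) #|awake st| #|D :&: B|.

Lemma ltnS_ord (u v : 'I_n) : (u < v.+1) = (u == v) || (u < v).
Proof. by rewrite ltnS leq_eqVlt. Qed.

Lemma acted_idle st i v : ~~ acts st i v -> acted st i v.+1 = acted st i v.
Proof.
move=> Hv; apply/setP => u; rewrite !inE ltnS_ord.
have [->|_] := eqVneq u v => //.
by rewrite ltnn; move: Hv; rewrite /acts; case: (_ \in _); case: (_ == _); rewrite ?orbF.
Qed.

Lemma acted_actor st i v : acts st i v -> v \notin acted st i v.
Proof. by case/andP=> Hv /eqP Hw; rewrite inE Hv Hw ltnn eqxx ltnn. Qed.

Lemma acted_act st st' i v : 0 < i -> acts st i v -> extends i st st' ->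
  acted st' i v.+1 = v |: acted st i v.
Proof.
move=> i_gt0 /andP[Hv /eqP Hw] [sub W N _]; apply/setP => u; rewrite !inE ltnS_ord.
have [->|ne_uv] := eqVneq u v; first by rewrite (subsetP sub _ Hv) W // Hw eqxx orbT.
case Hu: (u \in awake st); first by rewrite (subsetP sub _ Hu) W.
by case Hu': (u \in awake st') => //=; rewrite N ?Hu //; lia.
Qed.

Lemma acted_next_epoch st i : 0 < i -> acted st i n = acted st i.+1 0.
Proof.
move=> i_gt0; apply/setP => u; rewrite !inE ltn_ord andbT ltn0 andbF orbF.
case: (i) i_gt0 => // k _.
by rewrite /= orbC -leq_eqVlt.
Qed.

Lemma act_B1_cost_bound rnd i st v d : v \in B -> search_ok rnd st v ->
  cost_bound (`|KQ| * Num.sqrt n%:R * ln n%:R)%R n (costB1 st) #|awake st| d ->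
  cost_bound (`|KQ| * Num.sqrt n%:R * ln n%:R)%R n
    (costB1 (act rnd i v st)) #|awake (act rnd i v st)| d.+1.
Proof.
move=> Hv; have := @act_B1 _ adj port A1 alpha _ qs rnd i v st Hv.
rewrite /do_search /search_ok /= => ->.
set X := nbr adj v; set T := X :\: awake st; set o := qs _ v X T.
case/andP=> /eqP -> ho; rewrite /= (setIidPl (subsetDl X (awake st))).
have -> : #|awake st :|: T| = #|awake st| + #|T|.
  rewrite cardsU (_ : awake st :&: T = set0) ?cards0 ?subn0 //.
  by apply/setP => u; rewrite !inE; case: (u \in awake st); rewrite ?andbF.
have n_gt0 : 0 < n by apply: leq_ltn_trans (ltn_ord v).
apply: cost_bound_search; rewrite ?card_le_ord ?mulr_ge0 ?sqrtr_ge0 ?ln_ge0 ?ler1n //.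
rewrite -/T natrD lerD2r; apply: le_trans ho _.
by apply: search_cost_le; rewrite ?card_le_ord ?ln_ge0 ?ler1n.
Qed.

Lemma cost_inv_phase rnd i st (v : 'I_n) : 0 < i -> cost_inv st (acted st i v) ->
  (acts st i v -> v \in B -> ncalls st < ncalls_max n -> search_ok rnd st v) ->
  cost_inv (phase rnd i st v) (acted (phase rnd i st v) i v.+1).
Proof.
move=> i_gt0 [calls cost] ok; rewrite /Defs.phase -/(acts st i v).
have [Hact|Hidle] := boolP (acts st i v); last by rewrite acted_idle.
have [ext calls_act cost_act] := @act_extends _ adj port A1 alpha _ qs rnd i v st.
rewrite (acted_act i_gt0 Hact ext); set D := acted st i v.
have vD : v \notin D := acted_actor Hact.
have card_vD : #|v |: D| = #|D|.+1 by rewrite cardsU1 vD.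
split; first by rewrite card_vD mulnS addnC (leq_trans calls_act) // leq_add2r.
rewrite card_setU1I //; have [vB|vB] := boolP (v \in B); last first.
  by rewrite cost_act //; apply: cost_bound_awake cost; case: ext => /subset_leq_card.
apply: act_B1_cost_bound cost => //; apply: ok => //.
have := card_le_ord (v |: D); rewrite card_vD => D_lt; rewrite ltnS (leq_trans calls) // leq_mul2l ltnW ?orbT //.
Qed.

Local Notation pre := (pre_phase adj port A1 alpha qs).
Local Notation run_upto := (run_upto adj port A1 alpha qs).

Definition searches_ok (rnd : nat -> Rnd) : Prop :=
  forall i (v : 'I_n), 0 < i <= n -> acts (pre rnd i v) i v -> v \in B ->
    ncalls (pre rnd i v) < ncalls_max n -> search_ok rnd (pre rnd i v) v.

Lemma cost_inv_epoch rnd i p : 0 < i <= n -> p <= n -> searches_ok rnd ->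
  cost_inv (run_upto rnd i.-1) (acted (run_upto rnd i.-1) i 0) ->
  let st := foldl (phase rnd i) (run_upto rnd i.-1) (take p (enum 'I_n)) in
  cost_inv st (acted st i p).
Proof.
move=> Hi + ok inv0; have /andP[i_gt0 _] := Hi; elim: p => [|p IH] lt_pn; first by rewrite take0.
have p_lt : p < size (enum 'I_n) by rewrite size_enum_ord.
rewrite /= (take_nth (Ordinal lt_pn)) // foldl_rcons.
rewrite (nth_ord_enum (Ordinal lt_pn) (Ordinal lt_pn)).
apply: (cost_inv_phase (v := Ordinal lt_pn) i_gt0 (IH (ltnW lt_pn))).
exact: ok Hi.
Qed.

Lemma cost_inv_run rnd k : k <= n -> searches_ok rnd ->
  cost_inv (run_upto rnd k) (acted (run_upto rnd k) k.+1 0).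
Proof.
move=> + ok; elim: k => [|k IH] le_kn.
  split=> //; rewrite (_ : acted _ 1 0 = set0) ?set0I ?cards0; first exact: cost_bound0.
  by apply/setP => u; rewrite !inE /= !ltn0 !andbF.
have -> : run_upto rnd k.+1 = foldl (phase rnd k.+1) (run_upto rnd k) (take n (enum 'I_n)).
  by rewrite /run_upto -(addn1 k) iotaD foldl_cat /= add1n addn1 take_oversize ?size_enum_ord.
rewrite -acted_next_epoch //; apply: cost_inv_epoch => //; exact: IH (ltnW le_kn).
Qed.

Lemma B1_messages_le rnd : symmetric adj -> 2 <= n -> searches_ok rnd ->
  ((B1_messages adj port A1 alpha qs rnd)%:R <=
   (2 * `|KQ| + (ln 2%:R)^-1) * Num.sqrt (n%:R ^+ 3 / 2%:R ^+ beta alpha) * ln n%:R)%R.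
Proof.
move=> adj_sym n_ge2 ok; have [_ cost] := cost_inv_run (leqnn n) ok.
apply: cost_bound_final cost => //; first exact: card_le_ord.
apply: leq_trans (card_B1 A1 adj_sym alpha).
by rewrite leq_mul2r subset_leq_card ?orbT ?subsetIr.
Qed.

End CostInvariant.

Local Open Scope ring_scope.

Section ProductSpace.
Variables (R : realType) (Rnd : finType) (m : nat) (mu : Rnd -> R).
Hypothesis mu_distr : distribution mu.

Local Notation Omega := {ffun 'I_(ncalls_max m) -> Rnd}.
Local Notation P := (probN (n := m) mu).

Definition weight (rho : Omega) : R := \prod_k mu (rho k).

Lemma probNE E : P E = \sum_(rho | E rho) weight rho.
Proof. by []. Qed.

Lemma weight_ge0 rho : 0 <= weight rho.
Proof. by apply: prodr_ge0 => k _; case: mu_distr. Qed.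

Lemma sum_weight : \sum_rho weight rho = 1.
Proof.
rewrite /weight -(bigA_distr_bigA (fun _ r => mu r)) /=.
by rewrite big1 // => k _; case: mu_distr.
Qed.

Lemma probN_ge0 E : 0 <= P E.
Proof. by apply: sumr_ge0 => rho _; exact: weight_ge0. Qed.

Lemma probNT : P predT = 1.
Proof. exact: sum_weight. Qed.

Lemma probNC (E : pred Omega) : P (predC E) = 1 - P E.
Proof. by rewrite -[X in X - _]probNT /probN (bigID E predT) /= addrAC subrr add0r. Qed.

Lemma probN_sub (E1 E2 : pred Omega) : (forall rho, E1 rho -> E2 rho) -> P E1 <= P E2.
Proof.
move=> sub12; rewrite !probNE [X in _ <= X](bigID E1) /=.
rewrite (eq_bigl E1) ?lerDl ?sumr_ge0 // => [rho _|rho]; first exact: weight_ge0.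
by case E: (E1 rho); rewrite ?andbF ?andbT ?(sub12 _ E).
Qed.

Lemma probN_exists_le (I : finType) (B : I -> pred Omega) :
  P (fun rho => [exists x, B x rho]) <= \sum_x P (B x).
Proof.
rewrite /probN; under [X in _ <= X]eq_bigr => x _ do rewrite big_mkcond /=.
rewrite exchange_big /= big_mkcond /=; apply: ler_sum => rho _.
have w_ge0 y : 0 <= (if B y rho then weight rho else 0) by case: ifP => // _; exact: weight_ge0.
case: existsP => [[x Bx]|_]; last exact: sumr_ge0.
by rewrite (bigD1 x) //= Bx lerDl sumr_ge0.
Qed.

Definition upd (rho : Omega) j (r : Rnd) : Omega :=
  [ffun k => if k == j then r else rho k].

Lemma upd_upd rho j r r' : upd (upd rho j r) j r' = upd rho j r'.
Proof. by apply/ffunP => k; rewrite !ffunE; case: (k == j). Qed.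

Lemma upd_id rho j : upd rho j (rho j) = rho.
Proof. by apply/ffunP => k; rewrite !ffunE; case: eqP => [->|]. Qed.

Lemma upd_at rho j r : upd rho j r j = r.
Proof. by rewrite ffunE eqxx. Qed.

Lemma weight_upd rho j r : weight (upd rho j r) = mu r * \prod_(k | k != j) mu (rho k).
Proof.
rewrite /weight (bigD1 j) //= upd_at; congr (_ * _).
by apply: eq_bigr => k /negPf ne_kj; rewrite ffunE ne_kj.
Qed.

Lemma sum_upd (r0 : Rnd) j (F : Omega -> R) :
  \sum_rho F rho = \sum_(rho : Omega | rho j == r0) \sum_r F (upd rho j r).
Proof.
rewrite [RHS](exchange_big_dep predT) //= (partition_big (fun rho : Omega => rho j) predT) //=.
apply: eq_bigr => r _.
rewrite (reindex_onto (fun rho => upd rho j r) (fun rho => upd rho j r0)) /=; last first.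
  by move=> rho /eqP <-; rewrite upd_upd upd_id.
apply: eq_bigl => rho; rewrite upd_at eqxx andbT upd_upd.
by apply/eqP/eqP => [<-|<-]; rewrite ?upd_at ?upd_id.
Qed.

(* If the value [s rho] is, whenever [c] holds, independent of coordinate [j],
   then [rho j] is fresh randomness for the test [g (s rho)]. *)
Lemma probN_fresh_le (S : Type) j (s : Omega -> S) (c : pred S) (g : S -> pred Rnd) d :
  (forall rho r, c (s rho) -> s (upd rho j r) = s rho) ->
  (forall x, c x -> prob1 mu (predC (g x)) <= d) -> 0 <= d ->
  P (fun rho => c (s rho) && ~~ g (s rho) (rho j)) <= d.
Proof.
move=> s_indep g_le d_ge0.
have [r0 _] : exists r0 : Rnd, true.
  case: (pickP (@predT Rnd)) => [r0 _|none]; first by exists r0.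
  by case: mu_distr => _; rewrite big_pred0 // => /eqP; rewrite eq_sym oner_eq0.
pose V (rho : Omega) := \prod_(k | k != j) mu (rho k).
have V_ge0 rho : 0 <= V rho by apply: prodr_ge0 => k _; case: mu_distr.
rewrite probNE big_mkcond /= (sum_upd r0 j).
apply: (@le_trans _ _ (\sum_(rho : Omega | rho j == r0) d * V rho)).
  apply: ler_sum => rho _.
  case: (pickP (fun r => c (s (upd rho j r)))) => [r1 cr1|no_c]; last first.
    by rewrite big1 ?mulr_ge0 // => r _; rewrite no_c.
  have s_upd r : s (upd rho j r) = s (upd rho j r1) by rewrite -(upd_upd rho j r1 r) s_indep.
  under eq_bigr => r _ do rewrite s_upd upd_at weight_upd.
  rewrite cr1 -big_mkcond /= -mulr_suml mulrC [X in _ <= X]mulrC.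
  by apply: ler_wpM2l; [exact: V_ge0 | exact: g_le].
rewrite -mulr_sumr ler_piMr // -sum_weight (sum_upd r0 j weight); apply: ler_sum => rho _.
under eq_bigr => r _ do rewrite weight_upd.
by rewrite -mulr_suml; case: mu_distr => _ ->; rewrite mul1r.
Qed.

Lemma probN_union_bound (I : finType) (E : pred Omega) (B : I -> pred Omega) d :
  (forall rho, ~~ [exists x, B x rho] -> E rho) -> (forall x, P (B x) <= d) ->
  1 - #|I|%:R * d <= P E.
Proof.
move=> noB_E B_le; apply: le_trans (probN_sub noB_E).
rewrite (probNC (fun rho => [exists x, B x rho])) lerD2l lerN2.
apply: le_trans (probN_exists_le B) _.
by rewrite -sum1_card natr_sum mulr_suml ler_sum // => x _; rewrite mul1r.
Qed.

End ProductSpace.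

Lemma probN_small (R : realType) (Rnd : finType) (m c : nat) (mu : Rnd -> R)
    (E : pred {ffun 'I_(ncalls_max m) -> Rnd}) :
  distribution mu -> (m <= 1)%N -> (m = 0%N -> forall rho, E rho) ->
  1 - 1 / m%:R ^+ c <= probN mu E.
Proof.
case: m E => [|[|//]] E mu_distr _ E_all; last by rewrite expr1n divr1 subrr probN_ge0.
have -> : probN mu E = 1.
  by rewrite -(@probNT _ _ 0 _ mu_distr); apply: eq_bigl => rho; rewrite E_all.
by rewrite lerBlDr lerDl divr_ge0 // exprn_ge0.
Qed.

Lemma prob1C (R : realType) (Rnd : finType) (mu : Rnd -> R) (E : pred Rnd) :
  distribution mu -> prob1 mu (predC E) = 1 - prob1 mu E.
Proof.
case=> _ mu_sum; rewrite -[X in X - _]mu_sum /prob1 (bigID E predT) /=.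
by rewrite addrAC subrr add0r.
Qed.

Local Close Scope ring_scope.

Section SearchFailures.
Variables (R : realType) (KQ : R).
Variables (n : nat) (adj : rel 'I_n) (port : 'I_n -> 'I_n -> nat).
Variables (A1 : {set 'I_n}) (alpha : nat).
Variables (Rnd : finType) (qs : Rnd -> 'I_n -> {set 'I_n} -> {set 'I_n} -> {set 'I_n} * nat).

Local Notation Omega := {ffun 'I_(ncalls_max n) -> Rnd}.
Local Notation pre rho := (pre_phase adj port A1 alpha qs (sample rho)).

Definition failure_index : finType := ('I_n.+1 * 'I_n * 'I_(ncalls_max n))%type.

Definition search_fails (x : failure_index) (rho : Omega) : bool :=
  let: (i, v, j) := (val x.1.1, x.1.2, x.2) in
  [&& ncalls (pre rho i v) == j, acts (pre rho i v) i v & v \in B1 adj A1 alpha] &&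
  ~~ search_ok KQ adj qs (fun _ => rho j) (pre rho i v) v.

Lemma pre_phase_upd (rho : Omega) (j : 'I_(ncalls_max n)) r i v : ncalls (pre rho i v) = j ->
  pre (upd rho j r) i v = pre rho i v.
Proof.
move=> calls_j; symmetry; apply: pre_phase_causal => k lt_kj.
have k_lt : k < ncalls_max n by apply: ltn_trans (ltn_ord j); rewrite -calls_j.
rewrite /sample ffunE; case: eqP => // /(congr1 val); rewrite /= inordK //.
by move=> eq_kj; rewrite eq_kj calls_j ltnn in lt_kj.
Qed.

Lemma probN_search_fails_le (mu : Rnd -> R) cQ x : distribution mu ->
  search_spec adj mu qs KQ cQ -> (probN mu (search_fails x) <= 1 / n%:R ^+ cQ)%R.
Proof.
move=> mu_distr spec; case: x => [[i v] j].
apply: (probN_fresh_le mu_distr (s := fun rho => pre rho i v)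
  (c := fun st => [&& ncalls st == j, acts st i v & v \in B1 adj A1 alpha])
  (g := fun st r => search_ok KQ adj qs (fun _ => r) st v)).
- by move=> rho r /and3P[/eqP calls_j _ _]; exact: pre_phase_upd.
- move=> st /and3P[_ _ vB]; rewrite prob1C //.
  have := spec v (nbr adj v) (nbr adj v :\: awake st) (subxx _) (subsetDl _ _).
  by rewrite /search_ok; lra.
- by rewrite divr_ge0 // exprn_ge0.
Qed.

Lemma searches_ok_of_no_failure rho : ~~ [exists x, search_fails x rho] ->
  searches_ok KQ adj port A1 alpha qs (sample rho).
Proof.
move=> /existsPn no_fail i v /andP[_ le_in] Hact vB lt_calls.
have := no_fail (inord i, v, Ordinal lt_calls).
rewrite /search_fails /= inordK ?ltnS // eqxx Hact vB /= => /negPn.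
by rewrite (search_ok_ext KQ adj qs (r2 := sample rho)) // /sample -[Ordinal _]inord_val.
Qed.

End SearchFailures.

Local Open Scope ring_scope.

Lemma card_failure_index_mul_le (R : realType) (n c : nat) : (2 <= n)%N ->
  #|failure_index n|%:R * (1 / n%:R ^+ (c + 5)) <= 1 / n%:R ^+ c :> R.
Proof.
move=> n_ge2; have n_gt0 : 0 < n%:R :> R by rewrite ltr0n; lia.
have card_le : (#|failure_index n| <= n ^ 5)%N.
  rewrite !card_prod !card_ord /ncalls_max; case: n n_ge2 {n_gt0} => [|[|k]] // _.
  by rewrite !expnS expn0 muln1; nia.
apply: le_trans (_ : n%:R ^+ 5 * (1 / n%:R ^+ (c + 5)) <= _).
  apply: ler_wpM2r; first by rewrite divr_ge0 // exprn_ge0 // ltW.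
  by rewrite -natrX ler_nat.
by rewrite exprD !div1r invfM mulrCA mulfV ?mulr1 // expf_neq0 // gt_eqF.
Qed.

Theorem lemma8 (R : realType) :
  forall c : nat, exists cQ : nat, forall KQ : R, exists K : R,
  forall (n : nat) (adj : rel 'I_n) (A1 : {set 'I_n}) (alpha : nat)
         (port : 'I_n -> 'I_n -> nat)
         (Rnd : finType) (mu : Rnd -> R)
         (qs : Rnd -> 'I_n -> {set 'I_n} -> {set 'I_n} -> {set 'I_n} * nat),
    simple_graph adj -> connected_graph adj -> port_numbering adj port ->
    distribution mu -> search_spec adj mu qs KQ cQ ->
    probN (n := n) mu (fun rho =>
      (B1_messages adj port A1 alpha qs (sample rho))%:R
        <= K * Num.sqrt (n%:R ^+ 3 / 2%:R ^+ beta alpha) * ln (n%:R : R))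
    >= 1 - 1 / (n%:R ^+ c).
Proof.
move=> c; exists (c + 5)%N => KQ; exists (2 * `|KQ| + (ln 2%:R)^-1).
move=> n adj A1 alpha port Rnd mu qs [adj_sym _] _ _ mu_distr spec.
have [n_le1|n_ge2] := leqP n 1.
  apply: probN_small => // n0 rho; subst n.
  by rewrite /B1_messages /= expr0n /= mul0r sqrtr0 mulr0 mul0r.
apply: (le_trans _ (probN_union_bound mu_distr _
  (fun x => probN_search_fails_le port A1 alpha x mu_distr spec))).
  by rewrite lerD2l lerN2 card_failure_index_mul_le.
by move=> rho /searches_ok_of_no_failure; exact: B1_messages_le.
Qed.
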